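(* For a finite rooted tree $T$ whose nodes $v$ carry labels $\ell(v)\in\mathbb{N}=\{1,2,\dots\}$, let $p_i$ denote the $i$-th prime, let $n_v$ be the number of vertices in the subtree $T_v$ rooted at $v$, and define $C_v(x)\in\mathbb{Z}[x]$ inductively by $C_v(x)=x+p_{\ell(v)}$ if $v$ is a leaf and $C_v(x)=x^{n_v}+p_{\ell(v)}\,x\prod_{u\text{ child of }v}C_u(x)+p_{\ell(v)}$ if $v$ is internal. Let $r$ be the root of $T$. Then $C_r(x)$ is a complete invariant for rooted labelled trees: for any two such labelled rooted trees $T$ (root $r$) and $T'$ (root $r'$), $C_r(x)=C_{r'}(x)$ if and only if there is an isomorphism of rooted trees from $T$ to $T'$ preserving labels.
   Context: An isomorphism of rooted labelled trees is a graph isomorphism mapping root to root and each node to a node with the same label. $T_v$ consists of $v$ and all its descendants. *)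

From HB Require Import structures.
From mathcomp Require Import all_boot all_order all_algebra.
Set Implicit Arguments. Unset Strict Implicit. Unset Printing Implicit Defensive.
Import GRing.Theory Num.Theory.

Definition next_prime (m : nat) : nat :=
  ex_minn (let: exist2 p Hlt Hp := prime_above m in
           ex_intro (fun q => (m < q) && prime q) p (introT andP (conj Hlt Hp))).

Fixpoint nthp (k : nat) : nat :=
  match k with 0 => 2 | k'.+1 => next_prime (nthp k') end.

Definition ith_prime (i : nat) : nat := nthp i.-1.

(* A tree is given by a finite vertex type, a root, and a parent map;
   the root is its own parent, and every vertex reaches the root by
   iterating the parent map (hence the structure is acyclic). *)
Record rltree := RLTree {
  vtx : finType;
  troot : vtx;
  parent : vtx -> vtx;
  label : vtx -> nat;
  parent_root : parent troot = troot;
  reach_root : forall v, connect (frel parent) v troot;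
  label_pos : forall v, 0 < label v
}.

Definition adj (T : rltree) (u v : vtx T) : bool :=
  (u != v) && ((parent u == v) || (parent v == u)).

Definition children (T : rltree) (v : vtx T) : {set vtx T} :=
  [set u | (u != troot T) && (parent u == v)].

Definition subtree (T : rltree) (v : vtx T) : {set vtx T} :=
  [set u | connect (frel (parent (r:=T))) u v].

Definition nsub (T : rltree) (v : vtx T) : nat := #|subtree v|.

(* C_v computed with fuel; fuel #|V| suffices since depth < #|V| *)
Fixpoint Cfuel (T : rltree) (k : nat) (v : vtx T) : {poly int} :=
  match k with
  | 0 => 0%R
  | k'.+1 =>
      let pv : {poly int} := (((ith_prime (label v))%:Z)%:P)%R in
      if children v == set0 then ('X + pv)%R
      else ('X^(nsub v) + pv * 'X * \prod_(u in children v) Cfuel k' u + pv)%R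
  end.

Definition Cpoly (T : rltree) (v : vtx T) : {poly int} := Cfuel #|vtx T| v.

Definition rl_iso (T T' : rltree) (f : vtx T -> vtx T') : Prop :=
  [/\ bijective f,
      f (troot T) = troot T',
      (forall v, label (f v) = label v) &
      (forall u v, adj (f u) (f v) = adj u v)].

From HB Require Import structures.
From mathcomp Require Import all_boot all_order all_algebra.
Set Implicit Arguments. Unset Strict Implicit. Unset Printing Implicit Defensive.
Import GRing.Theory Num.Theory.

(* C_v has constant term p = p_(label v), leading coefficient 1 mod p and all
   other coefficients divisible by p, so it is Eisenstein at p, hence
   irreducible over Q, and it has degree n_v.  From C_v = C_w we thus read off
   the labels, the sizes and, cancelling X^n_v and p, the equality of the
   products of the children's polynomials.  An Eisenstein polynomial whose
   constant term is the prime itself is determined by its associate class in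
   Q[x], so unique factorisation matches the children of v injectively with
   children of w having the same polynomial; induction on n_v glues these
   matchings into a label- and parent-preserving embedding of T into T', which
   is onto since both trees have n_r vertices.  Conversely C_v is transported
   along isomorphisms, which commute with the parent map. *)

Lemma nthp_prime k : prime (nthp k).
Proof. by case: k => //= k; rewrite /next_prime; case: ex_minnP => q /andP []. Qed.

Lemma nthp_ltS k : nthp k < nthp k.+1.
Proof. by rewrite /= /next_prime; case: ex_minnP => q /andP []. Qed.

Lemma ith_prime_inj a b : 0 < a -> 0 < b -> ith_prime a = ith_prime b -> a = b.
Proof.
have nthp_inj : injective nthp := incn_inj (leq_mono (homo_ltn ltn_trans nthp_ltS)).
by move=> a_gt0 b_gt0 /nthp_inj ab; rewrite -(prednK a_gt0) -(prednK b_gt0) ab.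
Qed.

Section ConstEisenstein.
Local Open Scope ring_scope.
Local Notation pZtoQ := (map_poly (intr : int -> rat)).

Definition const_eisenstein (p : nat) (P : {poly int}) : Prop :=
  [/\ prime p, P`_0 = p%:Z, ~~ (p %| lead_coef P)%Z
    & forall i, (i < (size P).-1)%N -> (p %| P`_i)%Z].

Lemma Euclid_dvdzM (p : nat) (x y : int) : prime p ->
  (p %| x * y)%Z = (p %| x)%Z || (p %| y)%Z.
Proof. by move=> p_pr; rewrite !dvdzE abszM Euclid_dvdM. Qed.

Lemma const_eisenstein_size p P : const_eisenstein p P -> (1 < size P)%N.
Proof.
case=> p_pr P0 Nlead _; case: ltngtP => // [|P1].
  rewrite ltnS leqn0 size_poly_eq0 => /eqP P_0.
  by move: P0 p_pr; rewrite P_0 coef0 => -[<-].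
by move: Nlead; rewrite /lead_coef -P1 P0 dvdzz.
Qed.

Lemma const_eisenstein_neq0 p P : const_eisenstein p P -> P != 0.
Proof. by move/const_eisenstein_size; rewrite -size_poly_gt0; apply: ltnW. Qed.

Lemma const_eisenstein_irreducible p P :
  const_eisenstein p P -> irreducible_poly (pZtoQ P).
Proof.
move=> eP; have [p_pr P0 Nlead dvd_coef] := eP.
apply/irreducible_rat_int; apply: (eisenstein_crit p_pr) => //.
  by rewrite neq_ltn (const_eisenstein_size eP) orbT.
rewrite P0 dvdzE !absz_nat natrXE -{2}(expn1 p).
by rewrite dvdn_Pexp2l // prime_gt1.
Qed.

(* Comparing constant terms pins down the prime, then the leading coefficient. *)
Lemma const_eisenstein_eqp p q P Q : const_eisenstein p P -> const_eisenstein q Q ->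
  pZtoQ P %= pZtoQ Q -> P = Q.
Proof.
move=> eP [q_pr Q0 _ _]; have [p_pr P0 Nlead _] := eP.
move/eqp_eq; rewrite !lead_coef_map_inj //; try exact: intr_inj.
rewrite -!map_polyZ => /(map_inj_poly (@intr_inj _) (rmorph0 _)) PQ.
have := congr1 (fun R : {poly int} => R`_0) PQ; rewrite /= !coefZ P0 Q0 => PQ0.
have /eqP qp : q == p.
  have : (p %| lead_coef P * q%:Z)%Z by rewrite -PQ0 dvdz_mull.
  by rewrite Euclid_dvdzM // (negPf Nlead) dvdzE !absz_nat dvdn_prime2 // eq_sym.
subst q; have lPQ : lead_coef Q = lead_coef P.
  by apply: mulIf PQ0; rewrite -natz pnatr_eq0 -lt0n prime_gt0.
move: PQ; rewrite lPQ -!mul_polyC; apply: mulfI.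
by rewrite polyC_eq0 lead_coef_eq0 (const_eisenstein_neq0 eP).
Qed.

Lemma const_eisenstein_XaddC (p : nat) : prime p ->
  size ('X + p%:Z%:P) = 2%N /\ const_eisenstein p ('X + p%:Z%:P).
Proof.
move=> p_pr; have P0 : ('X + p%:Z%:P)`_0 = p%:Z by rewrite coefD coefX coefC add0r.
rewrite size_XaddC; split=> //; split=> //.
  by rewrite lead_coefXaddC dvdzE /= Euclid_dvd1.
by rewrite size_XaddC => -[|//] _; rewrite P0 dvdzz.
Qed.

(* The coefficient of X^m is 1 + p * Q`_(m-1), hence prime to p and nonzero. *)
Lemma const_eisenstein_node (p m : nat) (Q : {poly int}) :
  prime p -> (0 < m)%N -> (size Q <= m)%N ->
  size ('X^m + p%:Z%:P * 'X * Q + p%:Z%:P) = m.+1 /\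
  const_eisenstein p ('X^m + p%:Z%:P * 'X * Q + p%:Z%:P).
Proof.
move=> p_pr m_gt0 size_Q; set P := 'X^m + _ + _.
have coefP i : P`_i = (i == m)%:R + p%:Z * (if i == 0%N then 0 else Q`_i.-1)
    + (if i == 0%N then p%:Z else 0).
  by rewrite !coefD coefXn -mulrA coefCM coefXM coefC.
have Pm : P`_m = 1 + p%:Z * Q`_m.-1 by rewrite coefP eqxx (gtn_eqF m_gt0) addr0.
have p_ndvd_Pm : ~~ (p %| P`_m)%Z.
  by rewrite Pm rpredDr ?dvdz_mulr // dvdzE /= Euclid_dvd1.
have size_P : size P = m.+1.
  apply/eqP; rewrite eqn_leq; apply/andP; split.
    apply/leq_sizeP => j mj; have j_gt0 : (0 < j)%N := leq_ltn_trans (leq0n m) mj.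
    rewrite coefP (gtn_eqF mj) (gtn_eqF j_gt0) nth_default ?mulr0 ?addr0 //.
    by rewrite (leq_trans size_Q) // -ltnS prednK.
  rewrite ltnNge; apply: contra p_ndvd_Pm => /leq_sizeP /(_ m (leqnn m)) ->.
  exact: dvdz0.
split=> //; split=> //.
- by rewrite coefP eq_sym (gtn_eqF m_gt0) add0r mulr0 add0r.
- by rewrite /lead_coef size_P.
rewrite size_P => i im; rewrite coefP (ltn_eqF im) add0r rpredD ?dvdz_mulr //.
by case: (i == 0%N); [apply: dvdzz | apply: dvdz0].
Qed.

Lemma irredp_dvdp_prod (I : eqType) (r : seq I) (G : I -> {poly rat}) (P : {poly rat}) :
  irreducible_poly P -> P %| \prod_(i <- r) G i -> exists2 i, i \in r & P %| G i.
Proof.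
move=> irrP; elim: r => [|j r IH].
  by rewrite big_nil dvdp1 => /eqP P1; have := irrP.1; rewrite P1.
rewrite big_cons; have [cop|gcdP] := irredp_XsubCP irrP (dvdp_gcdl P (G j)).
  rewrite Gauss_dvdpr -?gcdp_eqp1 // => /IH [i ir PGi].
  by exists i; rewrite // inE ir orbT.
by exists j; rewrite ?inE ?eqxx // -(eqp_dvdl _ gcdP) dvdp_gcdr.
Qed.

Lemma eq_prod_const_eisenstein (I J : finType) (j0 : J) (pF : I -> nat) (pG : J -> nat)
    (F : I -> {poly int}) (G : J -> {poly int}) (A : {set I}) (B : {set J}) :
  {in A, forall i, const_eisenstein (pF i) (F i)} ->
  {in B, forall j, const_eisenstein (pG j) (G j)} ->
  \prod_(i in A) F i = \prod_(j in B) G j ->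
  exists s : I -> J,
    [/\ {in A, forall i, s i \in B}, {in A, forall i, G (s i) = F i} & {in A &, injective s}].
Proof.
have [n] := ubnP #|A|; elim: n A B => // n IH A B /ltnSE cardA eF eG eqFG.
have [A0|[a aA]] := set_0Vmem A.
  by exists (fun=> j0); split=> i; rewrite A0 inE.
have Fa_dvd : pZtoQ (F a) %| \prod_(j <- enum B) pZtoQ (G j).
  by rewrite -rmorph_prod big_enum /= -eqFG (big_setD1 a aA) rmorphM dvdp_mulIl.
have [b] := irredp_dvdp_prod (const_eisenstein_irreducible (eF a aA)) Fa_dvd.
rewrite mem_enum => bB Fa_Gb.
have Gb : G b = F a.
  apply: const_eisenstein_eqp (eG b bB) (eF a aA) _; rewrite eqp_sym.
  apply: (const_eisenstein_irreducible (eG b bB)).2 Fa_Gb.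
  by rewrite size_rat_int_poly neq_ltn (const_eisenstein_size (eF a aA)) orbT.
have eqFG' : \prod_(i in A :\ a) F i = \prod_(j in B :\ b) G j.
  move: eqFG; rewrite (big_setD1 a aA) (big_setD1 b bB) /= Gb.
  exact/mulfI/(const_eisenstein_neq0 (eF a aA)).
have cardA' : (#|A :\ a| < n)%N by move: cardA; rewrite (cardsD1 a) aA.
have [s [sB Gs s_inj]] := IH (A :\ a) (B :\ b) cardA'
  (sub_in1 (subsetP (subsetDl A [set a])) eF)
  (sub_in1 (subsetP (subsetDl B [set b])) eG) eqFG'.
have inD1 i : i \in A -> i != a -> i \in A :\ a by rewrite in_setD1 => -> ->.
exists (fun i => if i == a then b else s i); split.
- move=> i iA; case: eqVneq => [//|ia].
  by have /setD1P [] := sB i (inD1 i iA ia).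
- by move=> i iA; case: eqVneq => [->|ia] //; apply: Gs (inD1 i iA ia).
move=> i1 i2 i1A i2A /=; case: eqVneq => [->|i1a]; case: eqVneq => [->|i2a] //.
- by move=> bs; have /setD1P [] := sB i2 (inD1 _ i2A i2a); rewrite -bs eqxx.
- by move=> sb; have /setD1P [] := sB i1 (inD1 _ i1A i1a); rewrite sb eqxx.
- exact: s_inj (inD1 _ i1A i1a) (inD1 _ i2A i2a).
Qed.

End ConstEisenstein.

Section RootedTree.
Variable T : rltree.
Implicit Types u v x y : vtx T.
Local Notation par := (@parent T).
Local Notation rt := (troot T).

Lemma subtreeP x v : reflect (exists k, iter k par x = v) (x \in subtree v).
Proof.
rewrite inE; apply: (iffP idP) => [/iter_findex|[k <-]]; last exact: fconnect_iter.
by exists (findex par x v).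
Qed.

Lemma subtree_refl v : v \in subtree v.
Proof. by apply/subtreeP; exists 0. Qed.

Lemma subtree_parent x : x \in subtree (par x).
Proof. by apply/subtreeP; exists 1. Qed.

Lemma subtree_root x : x \in subtree rt.
Proof. by rewrite inE reach_root. Qed.

Lemma subtree_trans y x z : x \in subtree y -> y \in subtree z -> x \in subtree z.
Proof. by rewrite !inE; apply: connect_trans. Qed.

(* Going n times around the cycle, where [iter n par x = rt], lands on the fixpoint [rt]. *)
Lemma parent_cycle_root x k : iter k.+1 par x = x -> x = rt.
Proof.
move=> cyc; have /subtreeP [n xn] := subtree_root x.
have cyc_n : iter (n * k.+1) par x = x by rewrite iterM; elim: n {xn} => //= n ->.
rewrite -cyc_n -(subnK (leq_pmulr n (ltn0Sn k))) iterD xn.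
exact: iter_fix (parent_root T).
Qed.

Lemma parent_neq x : x != rt -> par x != x.
Proof. by move=> xr; apply: contraNneq xr => /(@parent_cycle_root x 0) ->. Qed.

Lemma subtree_antisym x y : x \in subtree y -> y \in subtree x -> x = y.
Proof.
move=> /subtreeP [i xy] /subtreeP [j yx].
case: i xy => [<-//|i] xy; have /parent_cycle_root x_rt : iter (j + i).+1 par x = x.
  by rewrite -addnS iterD xy.
by rewrite -xy x_rt iter_fix // parent_root.
Qed.

Lemma subtree_total x y z : x \in subtree y -> x \in subtree z ->
  (y \in subtree z) || (z \in subtree y).
Proof.
move=> /subtreeP [i <-] /subtreeP [j <-].
wlog ij : i j / i <= j => [wlog|].
  by case: (leqP i j) => [/wlog|/ltnW /wlog]; rewrite // orbC.
by apply/orP; left; apply/subtreeP; exists (j - i); rewrite -iterD subnK.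
Qed.

Lemma subtree_parent_in x v : x \in subtree v -> x != v -> par x \in subtree v.
Proof.
case/subtreeP=> [[|k] <-]; rewrite ?eqxx // => _.
by apply/subtreeP; exists k; rewrite -iterSr.
Qed.

Lemma childrenP u v : (u \in children v) = (u != rt) && (par u == v).
Proof. by rewrite inE. Qed.

Lemma children_subtree u v : u \in children v -> u \in subtree v.
Proof. by rewrite childrenP => /andP [_ /eqP <-]; apply: subtree_parent. Qed.

Lemma children_subtreeN u v : u \in children v -> v \notin subtree u.
Proof.
move=> uv; apply/negP => /(subtree_antisym (children_subtree uv)) vu.
by move: uv; rewrite childrenP -vu => /andP [/parent_neq /negPf ->].
Qed.

Lemma subtree_children x v : x \in subtree v -> x != v ->
  exists2 u, u \in children v & x \in subtree u.
Proof.
case/subtreeP=> k; elim: k x => [|k IH] x; first by move=> /= -> /eqP.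
rewrite iterSr => iter_xv xv; case: (eqVneq (par x) v) => [pxv|pxv].
  exists x; last exact: subtree_refl.
  by rewrite childrenP pxv eqxx andbT; apply: contraNneq xv => x_rt; rewrite -pxv x_rt parent_root.
have [u uv xu] := IH _ iter_xv pxv.
by exists u => //; apply: subtree_trans (subtree_parent x) xu.
Qed.

Lemma children_subtree_uniq u1 u2 v x : u1 \in children v -> u2 \in children v ->
  x \in subtree u1 -> x \in subtree u2 -> u1 = u2.
Proof.
move=> u1v u2v xu1 xu2; wlog u12 : u1 u2 u1v u2v xu1 xu2 / u1 \in subtree u2 => [wlog|].
  by case/orP: (subtree_total xu1 xu2) => [/wlog|/wlog /esym]; apply.
apply: contraTeq (children_subtreeN u2v) => u1u2; apply: negbNE.
have := subtree_parent_in u12 u1u2; move: u1v; rewrite childrenP => /andP [_ /eqP ->].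
by move=> ->.
Qed.

Lemma subtreeD1 v : subtree v :\ v = \bigcup_(u in children v) subtree u.
Proof.
apply/setP => x; rewrite in_setD1; apply/andP/bigcupP => [[xv xs] | [u uv xu]].
  by have [u uv xu] := subtree_children xs xv; exists u.
split; last exact: subtree_trans xu (children_subtree uv).
by apply: contraNneq (children_subtreeN uv) => <-.
Qed.

Lemma nsub_gt0 v : 0 < nsub v.
Proof. by apply/card_gt0P; exists v; apply: subtree_refl. Qed.

Lemma nsub_children_lt u v : u \in children v -> nsub u < nsub v.
Proof.
move=> uv; apply/proper_card/properP; split.
  by apply/subsetP => x xu; apply: subtree_trans xu (children_subtree uv).
by exists v; [apply: subtree_refl | apply: children_subtreeN].
Qed.

Lemma nsub_rec v : nsub v = (\sum_(u in children v) nsub u).+1.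
Proof.
have disj : {in children v &, forall u u', u' != u -> [disjoint subtree u & subtree u']}.
  move=> u u' uv u'v u'u; rewrite -setI_eq0; apply/set0Pn => -[x /setIP [xu xu']].
  by rewrite (children_subtree_uniq u'v uv xu' xu) eqxx in u'u.
have [|triv inj] := trivIimset disj.
  by apply/imsetP => -[u _ /setP /(_ u)]; rewrite subtree_refl inE.
rewrite /nsub (cardsD1 v) subtree_refl subtreeD1 -cover_imset.
have := (leq_card_cover [set subtree u | u in children v]).2.
by rewrite triv => /eqP ->; rewrite big_imset.
Qed.

Lemma children_eq0 v : (children v == set0) = (nsub v == 1).
Proof.
rewrite nsub_rec eqSS sum_nat_eq0; apply/eqP/forall_inP => [-> u|nsub0].
  by rewrite inE.
by apply/setP => u; rewrite in_set0; apply/negP => /nsub0; rewrite -leqn0 leqNgt nsub_gt0.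
Qed.

End RootedTree.

Lemma nsub_root (T : rltree) : nsub (troot T) = #|vtx T|.
Proof. by apply: eq_card => x; rewrite subtree_root. Qed.

Section CPoly.
Variable T : rltree.
Implicit Types u v : vtx T.
Local Open Scope ring_scope.
Local Notation plabel v := ((ith_prime (label v))%:Z%:P : {poly int}).

Lemma Cfuel_stable k1 k2 v : (nsub v <= k1)%N -> (nsub v <= k2)%N -> Cfuel k1 v = Cfuel k2 v.
Proof.
elim: k1 k2 v => [|k1 IH] [|k2] v; rewrite ?leqn0 ?(gtn_eqF (nsub_gt0 v)) // => vk1 vk2 /=.
case: ifP => // _; congr (_ + _ * _ + _); apply: eq_bigr => u uv.
by apply: IH; rewrite -ltnS (leq_trans (nsub_children_lt uv)).
Qed.

Lemma Cpoly_rec v : Cpoly v = if children v == set0 then 'X + plabel v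
  else 'X^(nsub v) + plabel v * 'X * \prod_(u in children v) Cpoly u + plabel v.
Proof.
have [n nv] : exists n, nsub v = n.+1 by exists (nsub v).-1; rewrite prednK ?nsub_gt0.
rewrite /Cpoly (@Cfuel_stable _ (nsub v)) ?max_card // nv /= -nv.
case: ifP => // _; congr (_ + _ * _ + _); apply: eq_bigr => u uv.
by apply: Cfuel_stable; rewrite ?max_card // -ltnS -nv nsub_children_lt.
Qed.

Lemma Cpoly_spec v :
  size (Cpoly v) = (nsub v).+1 /\ const_eisenstein (ith_prime (label v)) (Cpoly v).
Proof.
have [n] := ubnP (nsub v); elim: n v => // n IH v /ltnSE nv.
have p_pr : prime (ith_prime (label v)) := nthp_prime _.
rewrite Cpoly_rec; case: ifP => [leaf|_].
  have -> : nsub v = 1%N by apply/eqP; rewrite -children_eq0 leaf.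
  exact: const_eisenstein_XaddC.
apply: const_eisenstein_node (nsub_gt0 v) _ => //.
apply: leq_trans (size_poly_prod_leq _ _) _.
rewrite (eq_bigr (fun u => nsub u + 1)%N) => [|u uv].
  by rewrite big_split sum1_card /= -addSn addnK nsub_rec.
by rewrite addn1; case: (IH u (leq_trans (nsub_children_lt uv) nv)).
Qed.

End CPoly.

Lemma Cpoly_eq_children (T T' : rltree) (v : vtx T) (w : vtx T') : Cpoly v = Cpoly w ->
  [/\ nsub v = nsub w, label v = label w
    & (\prod_(u in children v) Cpoly u = \prod_(u in children w) Cpoly u)%R].
Proof.
move=> eqC; have [size_v [_ v0 _ _]] := Cpoly_spec v; have [size_w [_ w0 _ _]] := Cpoly_spec w.
have nvw : nsub v = nsub w by move: size_v; rewrite eqC size_w => -[].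
have lvw : label v = label w.
  by apply: ith_prime_inj; rewrite ?label_pos //; move: v0; rewrite eqC w0 => -[].
split=> //; have leaf : (children v == set0) = (children w == set0) by rewrite !children_eq0 nvw.
case: (eqVneq (children v) set0) => [cv|cv].
  by move: leaf; rewrite cv eqxx => /esym/eqP ->; rewrite !big_set0.
move: eqC; rewrite !Cpoly_rec -leaf (negPf cv) nvw lvw => /addIr /addrI; apply: mulfI.
by rewrite mulf_neq0 ?polyX_eq0 // polyC_eq0 -natz pnatr_eq0 -lt0n (prime_gt0 (nthp_prime _)).
Qed.

Section Embedding.
Variables T T' : rltree.
Implicit Types (u v x y : vtx T) (w : vtx T').

Definition subtree_embedding (g : vtx T -> vtx T') v w : Prop :=
  [/\ g v = w, {in subtree v, forall x, label (g x) = label x},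
      {in subtree v, forall x, x != v -> parent (g x) = g (parent x)},
      {in subtree v, forall x, g x \in subtree w} & {in subtree v &, injective g}].

(* The default [w] is only taken outside [subtree v], where it is irrelevant. *)
Definition glue v w (gs : vtx T -> vtx T -> vtx T') x : vtx T' :=
  if x == v then w
  else if [pick u in children v | x \in subtree u] is Some u then gs u x else w.

Lemma glue_children v w gs u x : u \in children v -> x \in subtree u -> glue v w gs x = gs u x.
Proof.
move=> uv xu; rewrite /glue; case: eqVneq => [xv|_].
  by have := children_subtreeN uv; rewrite -xv xu.
case: pickP => [u' /andP [u'v xu'] | none]; first by rewrite (children_subtree_uniq u'v uv xu' xu).
by have := none u; rewrite uv xu.
Qed.

Lemma glue_embedding v w (s : vtx T -> vtx T') gs :
  label w = label v -> {in children v, forall u, s u \in children w} ->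
  {in children v &, injective s} ->
  {in children v, forall u, subtree_embedding (gs u) u (s u)} ->
  subtree_embedding (glue v w gs) v w.
Proof.
move=> lwv sw s_inj gsP; set G := glue v w gs.
have Gv : G v = w by rewrite /G /glue eqxx.
have Gx x : x \in subtree v -> x != v -> exists2 u, u \in children v &
    [/\ x \in subtree u, G x = gs u x & G x \in subtree (s u)].
  move=> xv x_v; have [u uv xu] := subtree_children xv x_v.
  have [_ _ _ gs_sub _] := gsP u uv.
  by exists u => //; rewrite /G (glue_children _ _ uv xu); split=> //; apply: gs_sub.
split=> // [x xv | x xv x_v | x xv | x y xv yv].
- case: (eqVneq x v) => [->|x_v]; first by rewrite Gv.
  have [u uv [xu -> _]] := Gx x xv x_v.
  by have [_ gs_label _ _ _] := gsP u uv; apply: gs_label.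
- have [u uv [xu -> _]] := Gx x xv x_v; have [gsu _ gs_par _ _] := gsP u uv.
  case: (eqVneq x u) => [xu'|x_u]; last first.
    by rewrite gs_par // /G (glue_children _ _ uv (subtree_parent_in xu x_u)).
  move: (uv) (sw u uv); rewrite xu' gsu !childrenP => /andP [_ /eqP ->] /andP [_ /eqP ->].
  by rewrite Gv.
- case: (eqVneq x v) => [->|x_v]; first by rewrite Gv subtree_refl.
  have [u uv [_ _ Gxs]] := Gx x xv x_v.
  exact: subtree_trans Gxs (children_subtree (sw u uv)).
- case: (eqVneq x v) => [->|x_v]; case: (eqVneq y v) => [->|y_v] //.
  + have [u uv [_ _ Gys]] := Gx y yv y_v; rewrite Gv => wGy.
    by have := children_subtreeN (sw u uv); rewrite wGy Gys.
  + have [u uv [_ _ Gxs]] := Gx x xv x_v; rewrite Gv => Gxw.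
    by have := children_subtreeN (sw u uv); rewrite -Gxw Gxs.
  have [u1 u1v [xu1 Gx1 Gxs1]] := Gx x xv x_v.
  have [u2 u2v [yu2 Gy2 Gys2]] := Gx y yv y_v.
  move=> Gxy; rewrite Gxy in Gxs1.
  have u12 := s_inj _ _ u1v u2v (children_subtree_uniq (sw _ u1v) (sw _ u2v) Gxs1 Gys2).
  subst u2; have [_ _ _ _ gs_inj] := gsP u1 u1v.
  by apply: gs_inj; rewrite // -Gx1 -Gy2.
Qed.

Lemma Cpoly_eq_embedding v w : Cpoly v = Cpoly w -> exists g, subtree_embedding g v w.
Proof.
have [n] := ubnP (nsub v); elim: n v w => // n IH v w /ltnSE nv eqC.
have [_ lvw eq_prod] := Cpoly_eq_children eqC.
have [s [sw eq_s s_inj]] := eq_prod_const_eisenstein w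
  (fun u _ => (Cpoly_spec u).2) (fun (u : vtx T') _ => (Cpoly_spec u).2) eq_prod.
have /fin_all_exists [gs gsP] u : exists g, u \in children v -> subtree_embedding g u (s u).
  have [uv|] := boolP (u \in children v); last by exists (fun=> w).
  have [g gP] := IH u (s u) (leq_trans (nsub_children_lt uv) nv) (esym (eq_s u uv)).
  by exists g.
by exists (glue v w gs); apply: glue_embedding (esym lvw) sw s_inj _.
Qed.

Lemma root_embedding_rl_iso g : subtree_embedding g (troot T) (troot T') ->
  #|vtx T'| <= #|vtx T| -> rl_iso g.
Proof.
case=> g_rt g_label g_parent _ g_inj_in card_le.
have g_inj : injective g by move=> x y; apply: g_inj_in; apply: subtree_root.
have g_par x : parent (g x) = g (parent x).
  case: (eqVneq x (troot T)) => [->|x_rt]; first by rewrite g_rt !parent_root g_rt.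
  by apply: g_parent; rewrite ?subtree_root.
split=> // [|x|x y]; first exact: inj_card_bij.
  by apply: g_label; apply: subtree_root.
by rewrite /adj !g_par !(inj_eq g_inj).
Qed.

End Embedding.

Section Isomorphism.
Variables (T T' : rltree) (f : vtx T -> vtx T').
Hypothesis f_iso : rl_iso f.
Implicit Types (u v x : vtx T).

Lemma rl_iso_parent v : parent (f v) = f (parent v).
Proof.
have [[g fK _] f_rt _ f_adj] := f_iso; have f_inj := can_inj fK.
have parent_rt : parent (f (troot T)) = f (parent (troot T)) by rewrite f_rt !parent_root.
have /subtreeP [n] := subtree_root v; elim: n v => [|n IH] v; first by move=> /= ->.
rewrite iterSr => /IH IHv; case: (eqVneq v (troot T)) => [->//|v_rt].
have : adj v (parent v) by rewrite /adj eq_sym parent_neq // eqxx.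
rewrite -f_adj /adj IHv => /andP [_ /orP [/eqP //|/eqP /f_inj ppv]].
by case/eqP: v_rt; apply: (@parent_cycle_root _ _ 1).
Qed.

Lemma rl_iso_subtree v x : (f x \in subtree (f v)) = (x \in subtree v).
Proof.
have [[g fK _] _ _ _] := f_iso.
have iter_f k y : iter k (@parent T') (f y) = f (iter k (@parent T) y).
  by elim: k => //= k ->; rewrite rl_iso_parent.
apply/subtreeP/subtreeP => -[k xv]; exists k; last by rewrite iter_f xv.
by apply: (can_inj fK); rewrite -iter_f.
Qed.

Lemma rl_iso_children v : children (f v) = f @: children v.
Proof.
have [[g fK gK] f_rt _ _] := f_iso; have f_inj := can_inj fK.
apply/setP => y; rewrite -[y]gK mem_imset // !childrenP rl_iso_parent.
by rewrite -f_rt !(inj_eq f_inj).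
Qed.

Lemma rl_iso_nsub v : nsub (f v) = nsub v.
Proof.
have [[g fK gK] _ _ _] := f_iso.
rewrite /nsub -(card_imset _ (can_inj fK)); apply: eq_card => y.
by rewrite -[y]gK mem_imset ?rl_iso_subtree //; apply: can_inj fK.
Qed.

Lemma rl_iso_Cpoly v : Cpoly (f v) = Cpoly v.
Proof.
have [[g fK _] _ f_label _] := f_iso.
have [n] := ubnP (nsub v); elim: n v => // n IH v /ltnSE nv.
rewrite !Cpoly_rec rl_iso_children imset_eq0 f_label rl_iso_nsub.
rewrite big_imset /=; last exact: in2W (can_inj fK).
case: ifP => // _; congr (_ + _ * _ + _)%R; apply: eq_bigr => u uv.
exact: IH (leq_trans (nsub_children_lt uv) nv).
Qed.

End Isomorphism.

Theorem mainTheorem5 (T T' : rltree) :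
  Cpoly (troot T) = Cpoly (troot T') <-> exists f : vtx T -> vtx T', rl_iso f.
Proof.
split=> [eqC | [f f_iso]].
  have [g g_emb] := Cpoly_eq_embedding eqC; exists g.
  have [size_eq _ _] := Cpoly_eq_children eqC.
  by apply: root_embedding_rl_iso g_emb _; rewrite -!nsub_root size_eq.
by have [_ f_rt _ _] := f_iso; rewrite -f_rt rl_iso_Cpoly.
Qed.
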